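(* Let $S$ be a finite set of possibly partial distributions all with the same total mass, and let $\textsc{OPT}_S$ be a minimum-entropy coupling of $S$ (viewed as a possibly partial distribution via its list of nonzero masses). Then $\textsc{Inv-Sketch}_{\textsc{OPT}_S}(y)\ge\textsc{Inv-Prof}_S(y)$ for all $y\in[0,1]$.
   Context: A possibly partial distribution is a finite vector of nonnegative reals with total mass at most $1$. A coupling of $S=\{p_1,\dots,p_m\}$ is a nonnegative array $\mathcal C(i_1,\dots,i_m)$ whose sum over all tuples with $k$-th coordinate $i_k$ equals $p_k(i_k)$; $\textsc{OPT}_S$ minimizes $\sum\mathcal C(i)\log_2(1/\mathcal C(i))$. For a possibly partial distribution $p$, $\textsc{Inv-Sketch}_p(y)=\sum_j p(j)\,[p(j)\le y]$, and $\textsc{Inv-Prof}_S(y)=\max_{p\in S}\textsc{Inv-Sketch}_p(y)$. *)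

From HB Require Import structures.
From mathcomp Require Import all_boot all_order all_algebra.
From mathcomp Require Import reals exp.
Set Implicit Arguments. Unset Strict Implicit. Unset Printing Implicit Defensive.
Import Order.TTheory GRing.Theory Num.Theory.
Local Open Scope ring_scope.

Definition partial_dist (R : realType) (n : nat) (p : 'I_n -> R) : Prop :=
  (forall j, 0 <= p j) /\ \sum_(j < n) p j <= 1.

Definition mass (R : realType) (n : nat) (p : 'I_n -> R) : R := \sum_(j < n) p j.

Definition tuples (m : nat) (n : 'I_m -> nat) : finType :=
  {dffun forall k : 'I_m, 'I_(n k)}.

Definition is_coupling (R : realType) (m : nat) (n : 'I_m -> nat)
    (p : forall k : 'I_m, 'I_(n k) -> R) (C : tuples n -> R) : Prop :=
  (forall t, 0 <= C t) /\
  (forall (k : 'I_m) (i : 'I_(n k)), \sum_(t : tuples n | t k == i) C t = p k i).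

Definition log2 (R : realType) (x : R) : R := ln x / ln 2.
Definition ent_term (R : realType) (x : R) : R :=
  if x == 0 then 0 else x * log2 (x^-1).

Definition entropy (R : realType) (m : nat) (n : 'I_m -> nat) (C : tuples n -> R) : R :=
  \sum_(t : tuples n) ent_term (C t).

Definition is_min_entropy_coupling (R : realType) (m : nat) (n : 'I_m -> nat)
    (p : forall k : 'I_m, 'I_(n k) -> R) (C : tuples n -> R) : Prop :=
  is_coupling p C /\ forall C', is_coupling p C' -> entropy C <= entropy C'.

Definition inv_sketch (R : realType) (T : finType) (p : T -> R) (y : R) : R :=
  \sum_(j : T) (if p j <= y then p j else 0).

(* Inv-Prof_S(y) = max_{p in S} Inv-Sketch_p(y)  (sketches are >= 0, so 0 is a neutral default). *)
Definition inv_prof (R : realType) (m : nat) (n : 'I_m -> nat)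
    (p : forall k : 'I_m, 'I_(n k) -> R) (y : R) : R :=
  \big[Num.max/0]_(k < m) inv_sketch (p k) y.

From HB Require Import structures.
From mathcomp Require Import all_boot all_order all_algebra.
From mathcomp Require Import reals exp.
Import Order.TTheory GRing.Theory Num.Theory.
Local Open Scope ring_scope.

(* Every marginal p_k of a coupling C is the pushforward of C along the
   projection t |-> t k, and pushing a nonnegative mass function forward can
   only shrink its inverse sketch: each atom C t of a fibre over i is at most
   p_k i, so if p_k i <= y then the whole fibre counts in the sketch of C. *)

Section PushforwardSketch.

Variables (R : realType) (T U : finType) (f : T -> U) (C : T -> R) (q : U -> R).
Hypothesis C_ge0 : forall t, 0 <= C t.
Hypothesis q_pushforward : forall u, \sum_(t | f t == u) C t = q u.

Lemma le_pushforward t : C t <= q (f t).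
Proof.
rewrite -q_pushforward (bigD1 t) //= lerDl.
exact: sumr_ge0.
Qed.

Lemma inv_sketch_pushforward_le y : inv_sketch q y <= inv_sketch C y.
Proof.
apply: (@le_trans _ _ (\sum_t (if q (f t) <= y then C t else 0))).
  rewrite (partition_big f xpredT) //=; apply: ler_sum => u _.
  case: ifP => [qu_le | _]; last by apply: sumr_ge0 => t _; case: ifP.
  by rewrite -q_pushforward; apply: ler_sum => t /eqP ->; rewrite qu_le.
apply: ler_sum => t _; case: ifP => [qft_le | _].
  by rewrite (le_trans (le_pushforward t) qft_le).
by case: ifP.
Qed.

End PushforwardSketch.

Lemma inv_sketch_ge0 (R : realType) (T : finType) (p : T -> R) y :
  (forall j, 0 <= p j) -> 0 <= inv_sketch p y.
Proof. by move=> p_ge0; apply: sumr_ge0 => j _; case: ifP. Qed.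

Lemma inv_prof_le (R : realType) (m : nat) (n : 'I_m -> nat)
    (p : forall k : 'I_m, 'I_(n k) -> R) y s :
  0 <= s -> (forall k, inv_sketch (p k) y <= s) -> inv_prof p y <= s.
Proof.
move=> s_ge0 sketch_le; rewrite /inv_prof.
elim/big_ind: _ => // a b a_le b_le.
by rewrite ge_max a_le b_le.
Qed.

Theorem lemma4 (R : realType) (m : nat) (n : 'I_m -> nat)
    (p : forall k : 'I_m, 'I_(n k) -> R)
    (hdist : forall k, partial_dist (p k))
    (hmass : forall k l, mass (p k) = mass (p l))
    (C : tuples n -> R)
    (hopt : is_min_entropy_coupling p C) :
  forall y : R, 0 <= y <= 1 -> inv_prof p y <= inv_sketch C y.
Proof.
move=> y _; case: hopt => [[C_ge0 C_marginal] _].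
apply: inv_prof_le; first exact: inv_sketch_ge0.
move=> k.
exact: (@inv_sketch_pushforward_le R (tuples n) _ (fun t : tuples n => t k)
          C (p k) C_ge0 (C_marginal k) y).
Qed.
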